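(* Suppose the description of $K$ contains a ball constraint $g_m(x)=R^2-\sum_{i=1}^n x_i^2$ for some real $R$. Then for every integer $d\ge d_{\min}$, $-\infty<\operatorname{val}P_d=\operatorname{val}D_d$ (with values in $\mathbb R\cup\{+\infty\}$).
   Context: Polynomial optimization problem: minimize $f(x)=\sum_\alpha f_\alpha x^\alpha$ over $x\in\mathbb R^n$ subject to $g_i(x)=\sum_\alpha g_{i,\alpha}x^\alpha\ge 0$, $i=1,\dots,m$, with real polynomials $f,g_i$; $K=\{x:g_i(x)\ge0,\ i=1,\dots,m\}$. Set $g_0:=1$, $d_i:=\lceil\deg(g_i)/2\rceil$, $d_{\min}:=\max_{i=0,\dots,m}d_i$ (assume $\deg f\le 2d$). For $y=(y_\alpha)_{|\alpha|\le 2d}$, the localizing matrix $M_{d-d_i}(g_iy):=\big(\sum_\gamma g_{i,\gamma}y_{\alpha+\beta+\gamma}\big)_{|\alpha|,|\beta|\le d-d_i}$ is written $\sum_{|\alpha|\le 2d}A_{i,\alpha}y_\alpha$ with real symmetric matrices $A_{i,\alpha}$. $P_d$: $\inf_y\sum_\alpha f_\alpha y_\alpha$ s.t. $y_0=1$, $M_{d-d_i}(g_iy)\succeq0$, $i=0,\dots,m$. $D_d$: $\sup_{z\in\mathbb R,Z_0,\dots,Z_m} z$ s.t. $f_0-z=\sum_{i=0}^m\langle A_{i,0},Z_i\rangle$, $f_\alpha=\sum_{i=0}^m\langle A_{i,\alpha},Z_i\rangle$ for $0<|\alpha|\le 2d$, $Z_i\succeq0$, where $\langle A,B\rangle=\operatorname{trace}(AB)$.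 $\operatorname{val}$ denotes the optimal value, with $\inf\emptyset=+\infty$, $\sup\emptyset=-\infty$. *)

(* Real numbers are modelled as an arbitrary realFieldType
   satisfying the least-upper-bound property (i.e. a complete ordered field,
   which is the field of real numbers up to isomorphism). *)
From HB Require Import structures.
From mathcomp Require Import all_boot all_order all_algebra.
Set Implicit Arguments. Unset Strict Implicit. Unset Printing Implicit Defensive.
Import Order.TTheory GRing.Theory Num.Theory.
Local Open Scope ring_scope.

Section Defs.
Variable R : realFieldType.

Definition is_lub (S : R -> Prop) (s : R) :=
  (forall x, S x -> x <= s) /\ (forall w, (forall x, S x -> x <= w) -> s <= w).
Definition is_glb (S : R -> Prop) (s : R) :=
  (forall x, S x -> s <= x) /\ (forall w, (forall x, S x -> w <= x) -> w <= s).

Definition complete_field :=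
  forall S : R -> Prop, (exists x, S x) -> (exists M, forall x, S x -> x <= M) ->
  exists s, is_lub S s.

Inductive xR := XFin of R | XPInf | XNInf.

Definition is_infx (S : R -> Prop) (v : xR) : Prop :=
  match v with
  | XFin r => is_glb S r
  | XPInf => forall x, ~ S x
  | XNInf => forall w, exists x, S x /\ x < w
  end.
Definition is_supx (S : R -> Prop) (v : xR) : Prop :=
  match v with
  | XFin r => is_lub S r
  | XPInf => forall w, exists x, S x /\ w < x
  | XNInf => forall x, ~ S x
  end.

Definition MI (n : nat) := {ffun 'I_n -> nat}.
Definition mdeg n (a : MI n) : nat := (\sum_(i < n) a i)%N.
Definition madd n (a b : MI n) : MI n := [ffun i => (a i + b i)%N].
Definition mi0 n : MI n := [ffun _ => 0%N].

Definition mons n (k : nat) : seq (MI n) :=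
  map (fun a : {ffun 'I_n -> 'I_k.+1} => [ffun j => nat_of_ord (a j)] : MI n)
    (enum [pred a : {ffun 'I_n -> 'I_k.+1} | (\sum_j nat_of_ord (a j) <= k)%N]).

(* real polynomials in n variables, as finite lists of terms (alpha, coefficient);
   the coefficient of x^alpha is the sum of the coefficients of terms with
   exponent alpha *)
Definition mpoly n := seq (MI n * R).
Definition coef n (p : mpoly n) (a : MI n) : R := \sum_(t <- p | t.1 == a) t.2.
Definition deg n (p : mpoly n) : nat := (\max_(t <- p | coef p t.1 != 0%R) mdeg t.1)%N.
Definition meval n (p : mpoly n) (x : 'I_n -> R) : R :=
  \sum_(t <- p) t.2 * \prod_(i < n) x i ^+ t.1 i.

Definition poly1 n : mpoly n := [:: (mi0 n, 1)].
(* the ball polynomial  rad^2 - sum_i x_i^2 *)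
Definition ballpoly n (rad : R) : mpoly n :=
  (mi0 n, rad ^+ 2) :: [seq ([ffun i => if i == j then 2%N else 0%N], -1) | j <- enum 'I_n].

Definition gfull n (g : nat -> mpoly n) (i : nat) : mpoly n :=
  if i == 0%N then poly1 n else g i.
Definition dg n (g : nat -> mpoly n) (i : nat) : nat := uphalf (deg (gfull g i)).
Definition dmin n (g : nat -> mpoly n) (m : nat) : nat := (\max_(i < m.+1) dg g i)%N.

Definition msz n (g : nat -> mpoly n) (d i : nat) : nat := size (mons n (d - dg g i)).

Definition locmat n (g : mpoly n) (k : nat) (y : MI n -> R) : 'M[R]_(size (mons n k)) :=
  \matrix_(p, q) \sum_(c <- mons n (deg g))
     coef g c * y (madd (madd (nth (mi0 n) (mons n k) p) (nth (mi0 n) (mons n k) q)) c).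

(* the matrices A_alpha with M_k(g y) = sum_alpha A_alpha y_alpha *)
Definition Amat n (g : mpoly n) (k : nat) (a : MI n) : 'M[R]_(size (mons n k)) :=
  \matrix_(p, q) \sum_(c <- mons n (deg g))
     coef g c * (madd (madd (nth (mi0 n) (mons n k) p) (nth (mi0 n) (mons n k) q)) c == a)%:R.

Definition psd k (M : 'M[R]_k) : Prop :=
  M^T = M /\ forall v : 'cV[R]_k, 0 <= (v^T *m M *m v) ord0 ord0.

Definition frob k (A B : 'M[R]_k) : R := \tr (A *m B).

Definition Pfeas n (g : nat -> mpoly n) (m d : nat) (y : MI n -> R) : Prop :=
  y (mi0 n) = 1 /\ forall i : 'I_m.+1, psd (locmat (gfull g i) (d - dg g i) y).
Definition Pobj n (f : mpoly n) (d : nat) (y : MI n -> R) : R :=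
  \sum_(a <- mons n (2 * d)) coef f a * y a.
Definition Pvals n (f : mpoly n) (g : nat -> mpoly n) (m d : nat) (v : R) : Prop :=
  exists y, Pfeas g m d y /\ Pobj f d y = v.

Definition Dfeas n (f : mpoly n) (g : nat -> mpoly n) (m d : nat) (z : R)
    (Z : forall i : 'I_m.+1, 'M[R]_(msz g d i)) : Prop :=
  (forall i : 'I_m.+1, psd (Z i)) /\
  coef f (mi0 n) - z = \sum_(i < m.+1) frob (Amat (gfull g i) (d - dg g i) (mi0 n)) (Z i) /\
  (forall a, a \in mons n (2 * d) -> a != mi0 n ->
     coef f a = \sum_(i < m.+1) frob (Amat (gfull g i) (d - dg g i) a) (Z i)).
Definition Dvals n (f : mpoly n) (g : nat -> mpoly n) (m d : nat) (z : R) : Prop :=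
  exists Z, @Dfeas n f g m d z Z.

End Defs.

From HB Require Import structures.
From mathcomp Require Import all_boot all_order all_algebra.
From mathcomp Require Import ring lra zify.
From Stdlib Require Import Classical ClassicalEpsilon.
Import Order.TTheory GRing.Theory Num.Theory.
Set Implicit Arguments. Unset Strict Implicit. Unset Printing Implicit Defensive.
Local Open Scope ring_scope.

(* Weak duality is the trace inequality [<M, Z> >= 0] for positive semidefinite [M] and [Z].
   For strong duality, identify a polynomial of degree at most [2 d] with its coefficient vector
   and let [Q] be the cone of coefficient vectors of [sum_i g_i s_i] with [s_i] sums of squares
   of the degrees allowed in [D_d]; then [z] is feasible for [D_d] exactly when [f - z] lies in
   [Q].  The ball constraint makes the constant polynomial [1] an order unit of [Q]: by induction
   on [|b|], [R^2 x^(2b) - sum_j x^(2b + 2e_j)] in [Q] bounds [x^(2b)] by a multiple of [1], and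
   [2 x^(a+b) <= x^(2a) + x^(2b)] handles the other monomials.  A cone with an order unit is
   separated from every point outside it by a linear functional equal to [1] at the unit
   (Hahn-Banach for the gauge of the cone, which needs only the completeness of the field and no
   closedness of [Q]).  So for every [z], either [z] is feasible for [D_d] or the separating
   functional is a moment vector feasible for [P_d] with value at most [z]; with weak duality
   this gives [-oo < val P_d = val D_d]. *)

Lemma sum_indicator_seq (R : pzSemiRingType) (T : eqType) (s : seq T) (b : T) (H : T -> R) :
  uniq s -> b \in s -> \sum_(x <- s) (x == b)%:R * H x = H b.
Proof.
elim: s => [|x s IH] //= /andP[xs us]; rewrite inE big_cons.
case: eqVneq => [->|xb] /= bs; last by rewrite mul0r add0r IH.
rewrite mul1r big1_seq ?addr0 // => y /= ys.
by case: eqVneq => [yb|_]; [rewrite -yb ys in xs|rewrite mul0r].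
Qed.

Section PositiveSemidefinite.
Variable R : realFieldType.

Definition bform k (A : 'M[R]_k) (u v : 'cV[R]_k) : R := (u^T *m A *m v) 0 0.

Lemma bformE k (A : 'M[R]_k) u v : bform A u v = \sum_p \sum_q u p 0 * A p q * v q 0.
Proof.
rewrite /bform mxE exchange_big; apply: eq_bigr => p _; rewrite mxE big_distrl /=.
by apply: eq_bigr => q _; rewrite !mxE.
Qed.

Lemma bformDl k (A : 'M[R]_k) u w v : bform A (u + w) v = bform A u v + bform A w v.
Proof. by rewrite /bform linearD /= !mulmxDl mxE. Qed.
Lemma bformDr k (A : 'M[R]_k) u w v : bform A v (u + w) = bform A v u + bform A v w.
Proof. by rewrite /bform mulmxDr mxE. Qed.
Lemma bformZl k (A : 'M[R]_k) c u v : bform A (c *: u) v = c * bform A u v.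
Proof. by rewrite /bform linearZ /= -!scalemxAl mxE. Qed.
Lemma bformZr k (A : 'M[R]_k) c u v : bform A v (c *: u) = c * bform A v u.
Proof. by rewrite /bform -scalemxAr mxE. Qed.
Lemma bformDm k (A B : 'M[R]_k) u v : bform (A + B) u v = bform A u v + bform B u v.
Proof. by rewrite /bform mulmxDr mulmxDl mxE. Qed.
Lemma bformZm k (A : 'M[R]_k) c u v : bform (c *: A) u v = c * bform A u v.
Proof. by rewrite /bform -scalemxAr -scalemxAl mxE. Qed.
Lemma bformNm k (A : 'M[R]_k) u v : bform (- A) u v = - bform A u v.
Proof. by rewrite -scaleN1r bformZm mulN1r. Qed.

Lemma bform_sym k (A : 'M[R]_k) u v : A^T = A -> bform A u v = bform A v u.
Proof.
move=> sA; transitivity ((u^T *m A *m v)^T 0 0); first by rewrite mxE.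
by rewrite !trmx_mul trmxK sA mulmxA.
Qed.

Lemma bform_delta k (A : 'M[R]_k) a b : bform A (delta_mx a 0) (delta_mx b 0) = A a b.
Proof. by rewrite /bform trmx_delta -rowE -colE !mxE. Qed.

Lemma frob_outer k (A : 'M[R]_k) v : frob A (v *m v^T) = bform A v v.
Proof. by rewrite /frob mulmxA mxtrace_mulC mulmxA trace_mx11. Qed.

Lemma frobDr k (A Z1 Z2 : 'M[R]_k) : frob A (Z1 + Z2) = frob A Z1 + frob A Z2.
Proof. by rewrite /frob mulmxDr mxtraceD. Qed.
Lemma frobZr k (A Z : 'M[R]_k) c : frob A (c *: Z) = c * frob A Z.
Proof. by rewrite /frob -scalemxAr mxtraceZ. Qed.
Lemma frob0r k (A : 'M[R]_k) : frob A 0 = 0.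
Proof. by rewrite /frob mulmx0 linear0. Qed.
Lemma frobZl k (A Z : 'M[R]_k) c : frob (c *: A) Z = c * frob A Z.
Proof. by rewrite /frob -scalemxAl mxtraceZ. Qed.
Lemma frob_suml k I (r : seq I) (F : I -> 'M[R]_k) Z :
  frob (\sum_(j <- r) F j) Z = \sum_(j <- r) frob (F j) Z.
Proof. by rewrite /frob mulmx_suml linear_sum. Qed.

Lemma psd_ge0 k (A : 'M[R]_k) v : psd A -> 0 <= bform A v v.
Proof. by move=> [_]; apply. Qed.

Lemma psd0 k : psd (0 : 'M[R]_k).
Proof. by split=> [|v]; [rewrite trmx0|rewrite mulmx0 mul0mx mxE]. Qed.

Lemma psdD k (A B : 'M[R]_k) : psd A -> psd B -> psd (A + B).
Proof.
move=> [sA pA] [sB pB]; split=> [|v]; first by rewrite linearD /= sA sB.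
by rewrite mulmxDr mulmxDl mxE addr_ge0.
Qed.

Lemma psdZ k (A : 'M[R]_k) c : 0 <= c -> psd A -> psd (c *: A).
Proof.
move=> c0 [sA pA]; split=> [|v]; first by rewrite linearZ /= sA.
by rewrite -scalemxAr -scalemxAl mxE mulr_ge0.
Qed.

Lemma psd_outer k (v : 'cV[R]_k) : psd (v *m v^T).
Proof.
split=> [|w]; first by rewrite trmx_mul trmxK.
rewrite !mulmxA -mulmxA mxE big_ord1 -[w^T *m v]trmxK trmx_mul trmxK.
by rewrite mxE -expr2 sqr_ge0.
Qed.

Lemma psd_diag0 k (Z : 'M[R]_k) i j : psd Z -> Z i i = 0 -> Z i j = 0.
Proof.
move=> hZ Zii; have Zji : Z j i = Z i j by rewrite -{1}hZ.1 mxE.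
(* the quadratic form along [e_j + t e_i] is affine in [t], hence its slope vanishes *)
have ge0 t : 0 <= Z j j + 2%:R * t * Z i j.
  have := psd_ge0 (delta_mx j 0 + t *: delta_mx i 0) hZ.
  rewrite !bformDl !bformDr !bformZl !bformZr !bform_delta Zii Zji mulr0 mulr0 addr0.
  by rewrite -[2%:R * t * _]mulrA mulr_natl mulr2n addrA.
apply/eqP; apply/negP => /negP nz.
have := ge0 (- (Z j j + 1) / (2%:R * Z i j)).
have -> : 2%:R * (- (Z j j + 1) / (2%:R * Z i j)) * Z i j = - (Z j j + 1) by field.
by rewrite opprD addrA subrr sub0r oppr_ge0 ler10.
Qed.

Lemma psd_sub_outer_col k (Z : 'M[R]_k) i :
  psd Z -> 0 < Z i i -> psd (Z - (Z i i)^-1 *: (col i Z *m (col i Z)^T)).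
Proof.
move=> hZ Zi; set c := (Z i i)^-1; set w := col i Z.
split; first by rewrite linearB /= linearZ /= hZ.1 trmx_mul trmxK.
move=> v; rewrite -/(bform _ v v) bformDm bformNm bformZm.
set b := bform Z v (delta_mx i 0).
have wv : bform (w *m w^T) v v = b * b.
  have bw : (v^T *m w) 0 0 = b by rewrite /w colE mulmxA.
  rewrite /bform !mulmxA -[_ *m w^T *m v]mulmxA mxE big_ord1 bw; congr (_ * _).
  by rewrite -bw -[w^T *m v]trmxK trmx_mul trmxK mxE.
(* the quadratic form at [v - (b / Z i i) e_i] is the Schur complement value *)
have := psd_ge0 (v + (- (b * c)) *: delta_mx i 0) hZ.
rewrite !bformDl !bformDr !bformZl !bformZr bform_delta (bform_sym (delta_mx i 0) v hZ.1) -/b wv.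
by congr (0 <= _); rewrite /c; field; rewrite gt_eqF.
Qed.

Lemma frob_psd_ge0 k (M Z : 'M[R]_k) : psd M -> psd Z -> 0 <= frob M Z.
Proof.
(* induction on the number of nonzero diagonal entries of [Z], each step splitting off a
   rank-one term with [psd_sub_outer_col] *)
move=> hM; move: {2}#|_| (leqnn #|[set i | Z i i != 0]|) => K.
elim: K Z => [|K IH] Z supp hZ.
  have -> : Z = 0; last by rewrite frob0r.
  apply/matrixP => i j; rewrite mxE; apply: psd_diag0 => //; apply/eqP.
  apply: contraTT supp => nz; rewrite -ltnNge card_gt0.
  by apply/set0Pn; exists i; rewrite inE.
have [/eqP Z0|/set0Pn[i0]] := boolP ([set i | Z i i != 0] == set0).
  by apply: IH hZ; rewrite Z0 cards0.
rewrite inE => nz.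
have Zi0 : 0 < Z i0 i0 by rewrite lt_def nz -(bform_delta Z) psd_ge0.
set c := (Z i0 i0)^-1; set w := col i0 Z.
have hZ' := psd_sub_outer_col hZ Zi0; set Z' := Z - _ in hZ'.
rewrite -(subrK (c *: (w *m w^T)) Z) -/Z' frobDr frobZr frob_outer.
apply: addr_ge0; last by rewrite mulr_ge0 ?invr_ge0 ?(ltW Zi0) ?psd_ge0.
apply: IH hZ'; rewrite -ltnS; apply: leq_trans supp; apply: proper_card.
apply/properP; split; last first.
  by exists i0; rewrite !inE ?nz // negbK /Z' !mxE big_ord1 !mxE mulrA mulVf // mul1r subrr.
apply/subsetP => i; rewrite !inE /Z' !mxE big_ord1 !mxE; apply: contraNN => /eqP Zii.
by rewrite Zii (psd_diag0 i0 hZ Zii) mulr0 mulr0 subrr.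
Qed.

End PositiveSemidefinite.

Section RowDot.
Variables (R : realFieldType) (N : nat).
Implicit Types x y a b : 'rV[R]_N.

Definition rdot x a : R := (x *m a^T) 0 0.

Lemma rdotE x a : rdot x a = \sum_j x 0 j * a 0 j.
Proof. by rewrite /rdot mxE; apply: eq_bigr => j _; rewrite mxE. Qed.

Lemma rdotDl x y a : rdot (x + y) a = rdot x a + rdot y a.
Proof. by rewrite /rdot mulmxDl mxE. Qed.
Lemma rdotZl c x a : rdot (c *: x) a = c * rdot x a.
Proof. by rewrite /rdot -scalemxAl mxE. Qed.
Lemma rdotNl x a : rdot (- x) a = - rdot x a.
Proof. by rewrite -scaleN1r rdotZl mulN1r. Qed.
Lemma rdotBl x y a : rdot (x - y) a = rdot x a - rdot y a.
Proof. by rewrite rdotDl rdotNl. Qed.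
Lemma rdot0l a : rdot 0 a = 0.
Proof. by rewrite /rdot mul0mx mxE. Qed.
Lemma rdotDr x a b : rdot x (a + b) = rdot x a + rdot x b.
Proof. by rewrite /rdot linearD /= mulmxDr mxE. Qed.
Lemma rdotZr c x a : rdot x (c *: a) = c * rdot x a.
Proof. by rewrite /rdot linearZ /= -scalemxAr mxE. Qed.
Lemma rdot_deltar x j : rdot x (delta_mx 0 j) = x 0 j.
Proof. by rewrite /rdot trmx_delta -colE mxE. Qed.
Lemma rdot_deltal a j : rdot (delta_mx 0 j) a = a 0 j.
Proof. by rewrite /rdot -rowE !mxE. Qed.

End RowDot.

Section HahnBanach.
Variables (R : realFieldType) (N : nat) (p : 'rV[R]_N -> R) (u : 'rV[R]_N).
Hypothesis p_subadd : forall x y, p (x + y) <= p x + p y.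
Hypothesis p_homog : forall s x, 0 <= s -> p (s *: x) = s * p x.

Lemma sublinear0 : p 0 = 0.
Proof. by rewrite -(scale0r 0) p_homog // mul0r. Qed.

Definition supp_lt k (c : 'rV[R]_N) := forall j : 'I_N, (k <= j)%N -> c 0 j = 0.

Lemma supp_ltZ k r c : supp_lt k c -> supp_lt k (r *: c).
Proof. by move=> sc j kj; rewrite mxE sc // mulr0. Qed.

(* [a] extends [t u |-> t p(u)] to [span u + span (e_0, .., e_(k-1))] below [p] *)
Definition dominated_upto k (a : 'rV[R]_N) :=
  forall t c, supp_lt k c -> t * p u + rdot c a <= p (t *: u + c).

Lemma dominated_upto0 : dominated_upto 0 0.
Proof.
move=> t c c0; have -> : c = 0 by apply/matrixP => i j; rewrite [RHS]mxE ord1 c0.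
rewrite rdot0l !addr0; have [t0|/ltW t0] := leP 0 t; first by rewrite p_homog.
rewrite -[t *: u]opprK -scaleNr -scalerN p_homog ?oppr_ge0 //.
have : 0 <= p u + p (- u) by rewrite -sublinear0 -(subrr u) p_subadd.
nra.
Qed.

Section Step.
Variables (k : nat) (hk : (k < N)%N) (a : 'rV[R]_N).
Hypothesis a_dom : dominated_upto k a.
Let ek : 'rV[R]_N := delta_mx 0 (Ordinal hk).

Lemma dominated_sandwich t c t' c' : supp_lt k c -> supp_lt k c' ->
  t * p u + rdot c a - p (t *: u + c - ek) <= p (t' *: u + c' + ek) - (t' * p u + rdot c' a).
Proof.
move=> sc sc'; have sc'' : supp_lt k (c + c') by move=> j kj; rewrite mxE sc // sc' // addr0.
have := a_dom (t + t') sc''.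
have -> : (t + t') *: u + (c + c') = (t *: u + c - ek) + (t' *: u + c' + ek).
  by apply/matrixP => i j; rewrite !mxE /=; ring.
move/le_trans/(_ (p_subadd _ _)); rewrite rdotDl mulrDl; lra.
Qed.

Lemma dominated_extend s :
  (forall t c, supp_lt k c -> t * p u + rdot c a - p (t *: u + c - ek) <= s) ->
  (forall t c, supp_lt k c -> s <= p (t *: u + c + ek) - (t * p u + rdot c a)) ->
  dominated_upto k.+1 (a + (s - a 0 (Ordinal hk)) *: ek).
Proof.
(* write [c = c' + ck e_k] and rescale by [|ck|] to reach one of the two bounds on [s] *)
move=> s_lb s_ub t c sc; set ck := c 0 (Ordinal hk); set c' := c - ck *: ek.
have sc' : supp_lt k c'.
  move=> j kj; rewrite !mxE; case: (ltngtP k j) => [kj'|jk'|jk].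
  - have /negbTE-> : j != Ordinal hk by apply/eqP => E; rewrite E /= ltnn in kj'.
    by rewrite sc // mulr0 subr0.
  - by rewrite ltnNge kj in jk'.
  have -> : j = Ordinal hk by apply/val_inj.
  by rewrite !eqxx mulr1 subrr.
have -> : rdot c (a + (s - a 0 (Ordinal hk)) *: ek) = rdot c' a + ck * s.
  rewrite rdotDr rdotZr rdot_deltar /c' rdotBl rdotZl rdot_deltal -/ck; ring.
have [ck_lt0|ck_gt0|ck0] := ltgtP ck 0.
- have mck : 0 < - ck by rewrite oppr_gt0.
  have := s_lb (t / - ck) _ (supp_ltZ (- ck)^-1 sc').
  have -> : t / - ck *: u + (- ck)^-1 *: c' - ek = (- ck)^-1 *: (t *: u + c).
    by apply/matrixP => i j; rewrite /c' !mxE /=; field; rewrite ?oppr_eq0 lt_eqF.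
  rewrite p_homog ?invr_ge0 ?(ltW mck) // rdotZl => /(ler_wpM2l (ltW mck)).
  have -> : - ck * (t / - ck * p u + (- ck)^-1 * rdot c' a - (- ck)^-1 * p (t *: u + c))
      = t * p u + rdot c' a - p (t *: u + c) by field; rewrite ?oppr_eq0 lt_eqF.
  lra.
- have := s_ub (t / ck) _ (supp_ltZ ck^-1 sc').
  have -> : t / ck *: u + ck^-1 *: c' + ek = ck^-1 *: (t *: u + c).
    by apply/matrixP => i j; rewrite /c' !mxE /=; field; rewrite gt_eqF.
  rewrite p_homog ?invr_ge0 ?(ltW ck_gt0) // rdotZl => /(ler_wpM2l (ltW ck_gt0)).
  have -> : ck * (ck^-1 * p (t *: u + c) - (t / ck * p u + ck^-1 * rdot c' a))
      = p (t *: u + c) - (t * p u + rdot c' a) by field; rewrite gt_eqF.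
  lra.
have -> : c' = c by rewrite /c' ck0 scale0r subr0.
rewrite ck0 mul0r addr0; apply: a_dom => j; rewrite leq_eqVlt => /orP[/eqP kj|]; last exact: sc.
by have -> : j = Ordinal hk by apply/val_inj.
Qed.

Lemma dominated_step : complete_field R -> exists a', dominated_upto k.+1 a'.
Proof.
move=> R_complete; have supp0 : supp_lt k 0 by move=> j _; rewrite mxE.
pose S r := exists t c, supp_lt k c /\ r = t * p u + rdot c a - p (t *: u + c - ek).
have [s [s_ub s_least]] : exists s, is_lub S s.
  apply: R_complete; first by exists (0 * p u + rdot 0 a - p (0 *: u + 0 - ek)), 0, 0.
  exists (p (0 *: u + 0 + ek) - (0 * p u + rdot 0 a)) => r [t [c [sc ->]]].
  exact: dominated_sandwich.
exists (a + (s - a 0 (Ordinal hk)) *: ek); apply: dominated_extend.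
  by move=> t c sc; apply: s_ub; exists t, c.
by move=> t c sc; apply: s_least => r [t' [c' [sc' ->]]]; exact: dominated_sandwich.
Qed.

End Step.

Lemma hahn_banach_rV : complete_field R ->
  exists a, (forall x, rdot x a <= p x) /\ rdot u a = p u.
Proof.
move=> R_complete; have [a a_dom] : exists a, dominated_upto N a.
  suff: forall k, (k <= N)%N -> exists a, dominated_upto k a by apply.
  elim=> [_|k IH hk]; first by exists 0; exact: dominated_upto0.
  by have [a ha] := IH (ltnW hk); exact: dominated_step ha R_complete.
have suppN c : supp_lt N c by move=> j; rewrite leqNgt ltn_ord.
exists a; split=> [x|].
  by have := a_dom 0 _ (suppN x); rewrite mul0r add0r scale0r add0r.
have := a_dom 1 _ (suppN (- u)); rewrite scale1r mul1r subrr sublinear0 rdotNl.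
have := a_dom (-1) _ (suppN u); rewrite scaleN1r mulN1r addNr sublinear0.
lra.
Qed.

End HahnBanach.

Section Completeness.
Variable R : realFieldType.
Hypothesis R_complete : complete_field R.

Lemma complete_glb (S : R -> Prop) :
  (exists x, S x) -> (exists w, forall x, S x -> w <= x) -> exists r, is_glb S r.
Proof.
move=> [x Sx] [w hw].
have [s [s_ub s_least]] : exists s, is_lub (fun r => S (- r)) s.
  apply: R_complete; first by exists (- x); rewrite opprK.
  by exists (- w) => r Sr; rewrite lerNr; apply: hw.
exists (- s); split=> [y Sy|v hv]; first by rewrite lerNl; apply: s_ub; rewrite opprK.
by rewrite lerNr; apply: s_least => r Sr; rewrite lerNr; exact: hv.
Qed.

Lemma infx_supx_of_alternative (P D : R -> Prop) :
  (exists z, D z) -> (forall z v, D z -> P v -> z <= v) ->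
  (forall z, D z \/ exists2 v, P v & v <= z) ->
  exists v, v <> XNInf R /\ is_infx P v /\ is_supx D v.
Proof.
move=> [z0 Dz0] weak alt.
have [[v0 Pv0]|P0] := classic (exists v, P v); last first.
  exists (XPInf R); split=> //; split=> [v Pv|w]; first by apply: P0; exists v.
  by case: (alt (w + 1)) => [Dw|[v Pv _]]; [exists (w + 1); split=> //; lra|case: P0; exists v].
have [r [r_lb r_glb]] : exists r, is_glb P r.
  by apply: complete_glb => //; [exists v0|exists z0 => v; apply: weak].
exists (XFin r); split=> //; split; first by split.
split=> [z Dz|w w_ub]; first by apply: r_glb => v; apply: weak.
rewrite leNgt; apply/negP => w_lt_r.
case: (alt ((w + r) / 2%:R)) => [/w_ub|[v /r_lb]]; lra.
Qed.

End Completeness.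

Section OrderUnitCone.
Variables (R : realFieldType) (N : nat) (Q : 'rV[R]_N -> Prop) (e : 'rV[R]_N).
Hypothesis R_complete : complete_field R.
Hypothesis Q0 : Q 0.
Hypothesis QD : forall x y, Q x -> Q y -> Q (x + y).
Hypothesis QZ : forall s x, 0 <= s -> Q x -> Q (s *: x).
Hypothesis Qe : Q e.
Hypothesis order_unit : forall x, exists s, Q (s *: e - x).

Lemma cone_full : Q (- e) -> forall x, Q x.
Proof.
move=> Qne x; have [s Qs] := order_unit (- x); have [s0|/ltW s0] := leP 0 s.
  have -> : x = (s *: e - - x) + s *: (- e) by apply/matrixP => i j; rewrite !mxE /=; ring.
  by apply: QD => //; apply: QZ.
have -> : x = (s *: e - - x) + (- s) *: e by apply/matrixP => i j; rewrite !mxE /=; ring.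
by apply: QD => //; apply: QZ; rewrite ?oppr_ge0.
Qed.

Section Gauge.
Hypothesis proper : ~ Q (- e).

Lemma cone_scale_e_ge0 s : Q (s *: e) -> 0 <= s.
Proof.
move=> Qs; apply: contraT; rewrite -ltNge => s0; exfalso; apply: proper.
have -> : - e = (- s)^-1 *: (s *: e).
  by apply/matrixP => i j; rewrite !mxE /=; field; rewrite lt_eqF.
by apply: QZ => //; rewrite invr_ge0 oppr_ge0 ltW.
Qed.

Let above x s := Q (s *: e - x).

Definition gauge x := epsilon (inhabits 0) (is_glb (above x)).

Lemma gauge_glb x : is_glb (above x) (gauge x).
Proof.
apply: epsilon_spec; apply: (complete_glb R_complete).
  by have [s hs] := order_unit x; exists s.
have [s' hs'] := order_unit (- x); exists (- s') => s hs; rewrite -subr_ge0 opprK.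
apply: cone_scale_e_ge0; have -> : (s + s') *: e = (s *: e - x) + (s' *: e - - x).
  by apply/matrixP => i j; rewrite !mxE /=; ring.
exact: QD.
Qed.

Lemma gauge_le x s : Q (s *: e - x) -> gauge x <= s.
Proof. exact: (gauge_glb x).1. Qed.

Lemma gauge_ge x w : (forall s, Q (s *: e - x) -> w <= s) -> w <= gauge x.
Proof. exact: (gauge_glb x).2. Qed.

Lemma gauge_subadd x y : gauge (x + y) <= gauge x + gauge y.
Proof.
rewrite -lerBlDr; apply: gauge_ge => s hs; rewrite lerBlDl -lerBlDr.
apply: gauge_ge => s' hs'; rewrite lerBlDl; apply: gauge_le.
have -> : (s + s') *: e - (x + y) = (s *: e - x) + (s' *: e - y).
  by apply/matrixP => i j; rewrite !mxE /=; ring.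
exact: QD.
Qed.

Lemma gauge_homog s x : 0 <= s -> gauge (s *: x) = s * gauge x.
Proof.
rewrite le_eqVlt => /orP[/eqP<-|s0].
  rewrite scale0r mul0r; apply/eqP; rewrite eq_le; apply/andP; split.
    by apply: gauge_le; rewrite scale0r subr0.
  by apply: gauge_ge => r; rewrite subr0; exact: cone_scale_e_ge0.
apply/eqP; rewrite eq_le; apply/andP; split.
  rewrite -ler_pdivrMl //; apply: gauge_ge => r hr; rewrite ler_pdivrMl //.
  apply: gauge_le; have -> : (s * r) *: e - s *: x = s *: (r *: e - x).
    by apply/matrixP => i j; rewrite !mxE /=; ring.
  by apply: QZ => //; rewrite ltW.
apply: gauge_ge => r hr; rewrite -ler_pdivlMl //; apply: gauge_le.
have -> : (s^-1 * r) *: e - x = s^-1 *: (r *: e - s *: x).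
  by apply/matrixP => i j; rewrite !mxE /=; field; rewrite gt_eqF.
by apply: QZ => //; rewrite invr_ge0 ltW.
Qed.

Lemma gauge_opp_ge0 h : ~ Q h -> 0 <= gauge (- h).
Proof.
move=> nQh; apply: gauge_ge => s hs; rewrite leNgt; apply/negP => s0; apply: nQh.
have -> : h = (s *: e - - h) + (- s) *: e by apply/matrixP => i j; rewrite !mxE /=; ring.
by apply: QD => //; apply: QZ; rewrite ?oppr_ge0 ?ltW.
Qed.

End Gauge.

Theorem order_unit_separation h : Q h \/
  exists a, (forall q, Q q -> 0 <= rdot q a) /\ rdot e a = 1 /\ rdot h a <= 0.
Proof.
have [Qh|nQh] := classic (Q h); [by left|right].
have proper : ~ Q (- e) by move/cone_full/(_ h).
have [a [a_le a_eq]] := hahn_banach_rV (- h) (gauge_subadd proper) (gauge_homog proper) R_complete.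
exists a; split=> [q Qq|].
  have : gauge (- q) <= 0 by apply: (gauge_le proper); rewrite scale0r sub0r opprK.
  by have := a_le (- q); rewrite rdotNl; lra.
split.
  have : gauge e <= 1 by apply: (gauge_le proper); rewrite scale1r subrr.
  have : gauge (- e) <= -1 by apply: (gauge_le proper); rewrite scaleN1r subrr.
  by have := a_le e; have := a_le (- e); rewrite rdotNl; lra.
by have := gauge_opp_ge0 proper nQh; move: a_eq; rewrite rdotNl; lra.
Qed.

End OrderUnitCone.

Section MultiIndex.
Variable n : nat.
Implicit Types a b c : MI n.

Definition mi1 (j : 'I_n) : MI n := [ffun i => nat_of_bool (i == j)].
Definition mi2 (j : 'I_n) : MI n := [ffun i => if i == j then 2%N else 0%N].

Lemma coord_le_mdeg a j : (a j <= mdeg a)%N.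
Proof. by rewrite /mdeg (bigD1 j) //= leq_addr. Qed.

Lemma mem_mons k a : (a \in mons n k) = (mdeg a <= k)%N.
Proof.
apply/idP/idP.
  case/mapP => b; rewrite mem_enum inE => hb ->.
  by rewrite /mdeg (eq_bigr (fun j => nat_of_ord (b j))) // => j _; rewrite ffunE.
move=> ha; have aj j : (a j < k.+1)%N by rewrite ltnS (leq_trans (coord_le_mdeg a j) ha).
apply/mapP; exists [ffun j => Ordinal (aj j)]; last by apply/ffunP => j; rewrite !ffunE.
by rewrite mem_enum inE; rewrite (eq_bigr (fun j => a j)) // => j _; rewrite ffunE.
Qed.

Lemma mons_uniq k : uniq (mons n k).
Proof.
rewrite map_inj_uniq ?enum_uniq // => b b' /ffunP h; apply/ffunP => j; apply/val_inj.
by have := h j; rewrite !ffunE.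
Qed.

Lemma mdeg_madd a b : mdeg (madd a b) = (mdeg a + mdeg b)%N.
Proof. by rewrite /mdeg -big_split; apply: eq_bigr => j _; rewrite ffunE. Qed.
Lemma mdeg_mi0 : mdeg (mi0 n) = 0%N.
Proof. by rewrite /mdeg big1 // => j _; rewrite ffunE. Qed.
Lemma mdeg_mi1 j : mdeg (mi1 j) = 1%N.
Proof. by rewrite /mdeg (bigD1 j) //= ffunE eqxx big1 // => i /negbTE ij; rewrite ffunE ij. Qed.
Lemma mdeg_mi2 j : mdeg (mi2 j) = 2%N.
Proof. by rewrite /mdeg (bigD1 j) //= ffunE eqxx big1 // => i /negbTE ij; rewrite ffunE ij. Qed.

Lemma maddC a b : madd a b = madd b a.
Proof. by apply/ffunP => j; rewrite !ffunE addnC. Qed.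
Lemma maddA a b c : madd a (madd b c) = madd (madd a b) c.
Proof. by apply/ffunP => j; rewrite !ffunE addnA. Qed.
Lemma madd0 a : madd a (mi0 n) = a.
Proof. by apply/ffunP => j; rewrite !ffunE addn0. Qed.
Lemma madd_mi1 b j : madd (madd b (mi1 j)) (madd b (mi1 j)) = madd (madd b b) (mi2 j).
Proof. by apply/ffunP => k; rewrite !ffunE; case: (k == j) => /=; lia. Qed.

Lemma mi2_inj i j : (mi2 i == mi2 j) = (i == j).
Proof. by apply/eqP/eqP => [/ffunP/(_ i)|->//]; rewrite !ffunE eqxx; case: eqVneq. Qed.

Lemma mi0_mons k : mi0 n \in mons n k.
Proof. by rewrite mem_mons mdeg_mi0. Qed.

Lemma mdeg_eq0 a : mdeg a = 0%N -> a = mi0 n.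
Proof.
by move=> a0; apply/ffunP => j; rewrite ffunE; apply/eqP; rewrite -leqn0 -a0 coord_le_mdeg.
Qed.

Lemma mdeg_eqS a k : mdeg a = k.+1 -> exists b j, a = madd b (mi1 j) /\ mdeg b = k.
Proof.
move=> ak; have [j aj] : exists j, (0 < a j)%N.
  apply/existsP; apply: contraT; rewrite negb_exists => /forallP a0.
  by rewrite -[mdeg a]/(\sum_j a j)%N big1 in ak => // j _; apply/eqP; rewrite -leqn0 leqNgt a0.
pose b := [ffun i => (a i - (i == j))%N].
have ab : a = madd b (mi1 j).
  by apply/ffunP => i; rewrite !ffunE; case: eqVneq => [->|_]; rewrite ?subn0 ?addn0 ?subnK.
by exists b, j; split=> //; move: ak; rewrite ab mdeg_madd mdeg_mi1 addn1 => -[].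
Qed.

Lemma mdeg_split d c : (mdeg c <= d + d)%N ->
  exists a b, c = madd a b /\ (mdeg a <= d)%N /\ (mdeg b <= d)%N.
Proof.
move: {2}(mdeg c) (erefl (mdeg c)) => k; elim: k c => [|k IH] c ck cd.
  by exists (mi0 n), (mi0 n); rewrite madd0 mdeg_mi0 (mdeg_eq0 ck).
have [c' [j [cE c'k]]] := mdeg_eqS ck.
have [a [b [c'E [ad bd]]]] : exists a b, c' = madd a b /\ (mdeg a <= d)%N /\ (mdeg b <= d)%N.
  by apply: (IH _ c'k); rewrite c'k; move: cd; rewrite ck; lia.
have abk : (mdeg a + mdeg b = k)%N by rewrite -mdeg_madd -c'E.
rewrite cE c'E.
case: (ltnP (mdeg a) d) => ad'.
  exists (madd a (mi1 j)), b; rewrite mdeg_madd mdeg_mi1 addn1 -!maddA [madd b _]maddC.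
  by split.
exists a, (madd b (mi1 j)); rewrite -!maddA mdeg_madd mdeg_mi1; split=> //; split=> //.
by move: cd; rewrite ck -abk; lia.
Qed.

End MultiIndex.

Section Coefficients.
Variables (R : realFieldType) (n : nat).
Implicit Types q : mpoly R n.

Lemma coefE q a : coef q a = \sum_(t <- q) (t.1 == a)%:R * t.2.
Proof. by rewrite /coef big_mkcond; apply: eq_bigr => t _; case: eqP; rewrite ?mul1r ?mul0r. Qed.

Lemma coef_nz_mem q a : coef q a != 0 -> exists2 t, t \in q & t.1 = a.
Proof.
case: (boolP (has (fun t => t.1 == a) q)) => [/hasP[t tq /eqP ta]|/hasPn q_a]; first by exists t.
by rewrite /coef big_seq_cond big1 ?eqxx // => t /andP[/q_a/negbTE->].
Qed.

Lemma mdeg_le_deg q a : coef q a != 0 -> (mdeg a <= deg q)%N.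
Proof.
move=> qa; have [t tq ta] := coef_nz_mem qa.
by rewrite -ta; apply: (leq_bigmax_seq t) => //; rewrite ta.
Qed.

Lemma deg_le q k : (forall a, coef q a != 0 -> (mdeg a <= k)%N) -> (deg q <= k)%N.
Proof. by move=> h; apply/bigmax_leqP_seq => t _ /h. Qed.

Lemma sum_coef_seq q (S : seq (MI n)) (F : MI n -> R) :
  uniq S -> (forall t, t \in q -> t.1 \in S) ->
  \sum_(c <- S) coef q c * F c = \sum_(t <- q) t.2 * F t.1.
Proof.
move=> uS qS; under eq_bigr => c _ do rewrite coefE big_distrl /=.
rewrite exchange_big /=; apply: eq_big_seq => t tq.
rewrite -[RHS](sum_indicator_seq (fun c => t.2 * F c) uS (qS t tq)).
by apply: eq_bigr => c _; rewrite eq_sym; case: eqP; rewrite ?mul1r ?mul0r.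
Qed.

Lemma deg_poly1 : deg (poly1 R n) = 0%N.
Proof.
apply/eqP; rewrite -leqn0; apply: deg_le => a /mdeg_le_deg.
by rewrite /deg /poly1 big_cons big_nil mdeg_mi0; case: ifP.
Qed.

Lemma ballpoly_mdeg (rad : R) t : t \in ballpoly n rad -> (mdeg t.1 <= 2)%N.
Proof.
rewrite inE => /orP[/eqP-> /=|/mapP[j _ ->] /=]; first by rewrite mdeg_mi0.
by rewrite -[[ffun _ => _]]/(mi2 j) mdeg_mi2.
Qed.

Lemma coef_ballpoly_mi2 (rad : R) i : coef (ballpoly n rad) (mi2 i) = -1.
Proof.
rewrite coefE big_cons big_map.
have /negbTE-> : mi0 n != mi2 i by apply/eqP => /ffunP/(_ i); rewrite !ffunE eqxx.
rewrite mul0r add0r big_enum /= (bigD1 i) //= -[[ffun _ => _]]/(mi2 i) eqxx mul1r big1 ?addr0 //.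
by move=> j /negbTE ji; rewrite -[[ffun _ => _]]/(mi2 j) mi2_inj ji mul0r.
Qed.

End Coefficients.

Section Relaxation.
Variables (R : realFieldType) (n m : nat) (f : mpoly R n) (g : nat -> mpoly R n) (d : nat).
Hypothesis Hd : (dmin g m <= d)%N.

Local Notation N := (size (mons n (2 * d))).

Definition mon (j : nat) : MI n := nth (mi0 n) (mons n (2 * d)) j.

Definition gram_family := forall i : 'I_m.+1, 'M[R]_(msz g d i).

Definition sos_vec (Z : gram_family) : 'rV[R]_N :=
  \row_j \sum_(i < m.+1) frob (Amat (gfull g i) (d - dg g i) (mon j)) (Z i).

(* coefficient vectors of the truncated quadratic module of order [d] *)
Definition qmodule (x : 'rV[R]_N) := exists Z, (forall i, psd (Z i)) /\ x = sos_vec Z.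

Definition monvec (b : MI n) : 'rV[R]_N := \row_j (mon j == b)%:R.

Definition fvec : 'rV[R]_N := \row_j coef f (mon j).

Definition single_family (i : 'I_m.+1) (M : 'M[R]_(msz g d i)) : gram_family :=
  fun i' => match i =P i' with
  | ReflectT e => let e' := congr1 (fun k : 'I_m.+1 => msz g d k) e in castmx (e', e') M
  | ReflectF _ => 0 end.
Arguments single_family : clear implicits.

Lemma psd_single_family (i : 'I_m.+1) (M : 'M[R]_(msz g d i)) :
  psd M -> forall i', psd (single_family i M i').
Proof.
move=> hM i'; rewrite /single_family; case: (i =P i') => [e|_]; last exact: psd0.
by case: i' / e; rewrite castmx_id.
Qed.

Lemma sos_vec_single (i : 'I_m.+1) (M : 'M[R]_(msz g d i)) :
  sos_vec (single_family i M) = \row_j frob (Amat (gfull g i) (d - dg g i) (mon j)) M.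
Proof.
apply/matrixP => r j; rewrite !mxE (bigD1 i) //= big1 ?addr0.
  by rewrite /single_family; case: (i =P i) => [e|//]; rewrite castmx_id.
move=> i' ne; rewrite /single_family; case: (i =P i') => [e|_]; last by rewrite frob0r.
by rewrite e eqxx in ne.
Qed.

Lemma qmodule_single (i : 'I_m.+1) (M : 'M[R]_(msz g d i)) :
  psd M -> qmodule (\row_j frob (Amat (gfull g i) (d - dg g i) (mon j)) M).
Proof.
move=> hM; exists (single_family i M).
by rewrite sos_vec_single; split=> //; exact: psd_single_family.
Qed.
Arguments qmodule_single i [M].

Lemma qmodule0 : qmodule 0.
Proof.
exists (fun=> 0); split=> [i|]; first exact: psd0.
by apply/matrixP => r j; rewrite !mxE big1 // => i _; rewrite frob0r.
Qed.

Lemma qmoduleD x y : qmodule x -> qmodule y -> qmodule (x + y).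
Proof.
move=> [Z [hZ ->]] [Z' [hZ' ->]]; exists (fun i => Z i + Z' i); split=> [i|]; first exact: psdD.
by apply/matrixP => r j; rewrite !mxE -big_split; apply: eq_bigr => i _; rewrite frobDr.
Qed.

Lemma qmoduleZ s x : 0 <= s -> qmodule x -> qmodule (s *: x).
Proof.
move=> s0 [Z [hZ ->]]; exists (fun i => s *: Z i); split=> [i|]; first exact: psdZ.
by apply/matrixP => r j; rewrite !mxE big_distrr; apply: eq_bigr => i _; rewrite frobZr.
Qed.

Lemma qmodule_sum I (r : seq I) (F : I -> 'rV[R]_N) :
  (forall i, qmodule (F i)) -> qmodule (\sum_(i <- r) F i).
Proof.
move=> hF; elim: r => [|a r IH]; first by rewrite big_nil; exact: qmodule0.
by rewrite big_cons; apply: qmoduleD.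
Qed.

Lemma mon_inj (j j' : 'I_N) : (mon j == mon j') = (j == j').
Proof. by rewrite /mon nth_uniq ?mons_uniq. Qed.

Lemma monvec_mon (j : 'I_N) : monvec (mon j) = delta_mx 0 j.
Proof. by apply/matrixP => r k; rewrite !mxE mon_inj ord1 eqxx. Qed.

Lemma mon_mem (j : 'I_N) : mon j \in mons n (2 * d).
Proof. exact: mem_nth. Qed.

Lemma mon_index a : a \in mons n (2 * d) -> exists j : 'I_N, mon j = a.
Proof. by rewrite -index_mem => ha; exists (Ordinal ha); rewrite /mon nth_index // -index_mem. Qed.

Lemma sum_mon_indicator (H : MI n -> R) b : b \in mons n (2 * d) ->
  \sum_(j < N) (mon j == b)%:R * H (mon j) = H b.
Proof.
move=> hb.
by rewrite -(sum_indicator_seq H (mons_uniq n (2 * d)) hb) (big_nth (mi0 n)) big_mkord.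
Qed.

Lemma Pobj_mon y : Pobj f d y = \sum_(j < N) coef f (mon j) * y (mon j).
Proof. by rewrite /Pobj (big_nth (mi0 n)) big_mkord. Qed.

Lemma dg_le (i : 'I_m.+1) : (dg g i <= d)%N.
Proof. by apply: leq_trans Hd; apply: (leq_bigmax i). Qed.

Lemma deg_gfull_le i : (deg (gfull g i) <= 2 * dg g i)%N.
Proof.
rewrite /dg; move: (deg _) => x.
by rewrite uphalf_half -{1}[x](odd_double_half x) -addnn; case: (odd x) => /=; lia.
Qed.

Lemma locmat_decomp (i : 'I_m.+1) (y : MI n -> R) :
  locmat (gfull g i) (d - dg g i) y =
  \sum_(j < N) y (mon j) *: Amat (gfull g i) (d - dg g i) (mon j).
Proof.
apply/matrixP => p q; rewrite !mxE summxE.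
under [RHS]eq_bigr => j _ do rewrite !mxE big_distrr /=.
rewrite exchange_big /= big_seq [RHS]big_seq; apply: eq_bigr => c hc.
set b := madd _ c.
have hb : b \in mons n (2 * d).
  have mon_le (r : 'I_(size (mons n (d - dg g i)))) :
      (mdeg (nth (mi0 n) (mons n (d - dg g i)) r) <= d - dg g i)%N by rewrite -mem_mons mem_nth.
  move: hc; rewrite !mem_mons /b !mdeg_madd.
  have := mon_le p; have := mon_le q; have := deg_gfull_le i; have := dg_le i; lia.
rewrite -(sum_mon_indicator (fun a => coef (gfull g i) c * y a) hb).
by apply: eq_bigr => j _; rewrite eq_sym; case: eqP; rewrite ?mul1r ?mul0r ?mulr0 // mulr1 mulrC.
Qed.

Lemma weak_duality z Z y : @Dfeas R n f g m d z Z -> Pfeas g m d y -> z <= Pobj f d y.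
Proof.
move=> [hZ [Z_mi0 Z_mon]] [y0 hy].
have Zcoef (j : 'I_N) : coef f (mon j) - (mon j == mi0 n)%:R * z =
    \sum_(i < m.+1) frob (Amat (gfull g i) (d - dg g i) (mon j)) (Z i).
  case: eqP => [->|/eqP ne]; first by rewrite mul1r.
  by rewrite mul0r subr0; apply: Z_mon; [exact: mon_mem|].
have : 0 <= \sum_(i < m.+1) frob (locmat (gfull g i) (d - dg g i) y) (Z i).
  by apply: sumr_ge0 => i _; exact: frob_psd_ge0 (hy i) (hZ i).
under eq_bigr => i _ do rewrite locmat_decomp frob_suml.
under eq_bigr => i _ do under eq_bigr => j _ do rewrite frobZl.
rewrite exchange_big /=; under eq_bigr => j _ do rewrite -mulr_sumr -Zcoef.
have -> : \sum_(j < N) y (mon j) * (coef f (mon j) - (mon j == mi0 n)%:R * z) =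
   Pobj f d y - \sum_(j < N) (mon j == mi0 n)%:R * (z * y (mon j)).
  by rewrite Pobj_mon -sumrB; apply: eq_bigr => j _; ring.
by rewrite (sum_mon_indicator (fun b => z * y b)) ?mi0_mons // y0 mulr1 subr_ge0.
Qed.

Lemma Dvals_of_qmodule z : qmodule (fvec - z *: monvec (mi0 n)) -> Dvals f g m d z.
Proof.
move=> [Z [hZ e]]; exists Z; split=> //.
have Zcoef (j : 'I_N) : coef f (mon j) - z * (mon j == mi0 n)%:R =
    \sum_(i < m.+1) frob (Amat (gfull g i) (d - dg g i) (mon j)) (Z i).
  by have := congr1 (fun M : 'rV[R]_N => M 0 j) e; rewrite !mxE.
split.
  by have [j j0] := mon_index (mi0_mons n (2 * d)); have := Zcoef j; rewrite j0 eqxx mulr1.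
by move=> a ha a0; have [j ja] := mon_index ha; have := Zcoef j; rewrite ja (negbTE a0) mulr0 subr0.
Qed.

Lemma Pfeas_of_functional (a : 'rV[R]_N) :
  (forall q, qmodule q -> 0 <= rdot q a) -> rdot (monvec (mi0 n)) a = 1 ->
  Pfeas g m d (fun b => rdot (monvec b) a) /\
  Pobj f d (fun b => rdot (monvec b) a) = rdot fvec a.
Proof.
move=> a_ge0 a1; have y_mon (j : 'I_N) : rdot (monvec (mon j)) a = a 0 j.
  by rewrite monvec_mon rdot_deltal.
split; last by rewrite Pobj_mon rdotE; apply: eq_bigr => j _; rewrite y_mon mxE.
split=> // i; split.
  by apply/matrixP => p q; rewrite !mxE; apply: eq_bigr => c _; rewrite [madd (nth _ _ q) _]maddC.
move=> v; rewrite -/(bform _ v v) -frob_outer locmat_decomp frob_suml.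
under eq_bigr => j _ do rewrite frobZl y_mon.
have -> : \sum_j a 0 j * frob (Amat (gfull g i) (d - dg g i) (mon j)) (v *m v^T)
    = rdot (\row_j frob (Amat (gfull g i) (d - dg g i) (mon j)) (v *m v^T)) a.
  by rewrite rdotE; apply: eq_bigr => j _; rewrite mxE mulrC.
exact: a_ge0 (qmodule_single i (psd_outer v)).
Qed.

Definition mon_col k (b : MI n) : 'cV[R]_(size (mons n k)) :=
  \col_p (nth (mi0 n) (mons n k) p == b)%:R.

(* coefficient of [x^a] in [x^c * q(x)] *)
Definition shift_coef (q : mpoly R n) (c a : MI n) :=
  \sum_(c' <- mons n (deg q)) coef q c' * (madd c c' == a)%:R.

Lemma bform_Amat_mon_col q k a b b' : b \in mons n k -> b' \in mons n k ->
  bform (Amat q k a) (mon_col k b) (mon_col k b') = shift_coef q (madd b b') a.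
Proof.
move=> hb hb'; rewrite bformE.
rewrite -(sum_indicator_seq (fun x => shift_coef q (madd x b') a) (mons_uniq n k) hb).
rewrite (big_nth (mi0 n)) big_mkord; apply: eq_bigr => p _; set bp := nth _ _ p.
rewrite -(sum_indicator_seq (fun x => shift_coef q (madd bp x) a) (mons_uniq n k) hb').
rewrite (big_nth (mi0 n)) big_mkord.
rewrite big_distrr; apply: eq_bigr => p' _.
by rewrite !mxE /shift_coef -mulrA [X in _ * X = _]mulrC.
Qed.

Lemma shift_coef_poly1 c a : shift_coef (poly1 R n) c a = (c == a)%:R.
Proof.
rewrite /shift_coef (@sum_coef_seq R n _ _ (fun c' => (madd c c' == a)%:R)) ?mons_uniq //.
  by rewrite /poly1 big_cons big_nil /= madd0 mul1r addr0.
by move=> t; rewrite /poly1 inE => /eqP -> /=; exact: mi0_mons.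
Qed.

Lemma dg0 : dg g 0 = 0%N.
Proof. by rewrite /dg /gfull /= deg_poly1. Qed.

Lemma qmodule_square b : (mdeg b <= d)%N -> qmodule (monvec (madd b b)).
Proof.
move=> hb; have hb' : b \in mons n (d - dg g (ord0 : 'I_m.+1)) by rewrite dg0 subn0 mem_mons.
have := qmodule_single ord0 (psd_outer (mon_col _ b)).
congr qmodule; apply/matrixP => r j; rewrite !mxE frob_outer bform_Amat_mon_col //.
by rewrite /gfull /= shift_coef_poly1 eq_sym.
Qed.

Lemma qmodule_binomial b b' (s : R) : (mdeg b <= d)%N -> (mdeg b' <= d)%N -> s * s = 1 ->
  qmodule (monvec (madd b b) + monvec (madd b' b') + (2%:R * s) *: monvec (madd b b')).
Proof.
move=> hb hb' ss; set k := (d - dg g (ord0 : 'I_m.+1))%N.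
have hbk : b \in mons n k by rewrite /k dg0 subn0 mem_mons.
have hbk' : b' \in mons n k by rewrite /k dg0 subn0 mem_mons.
pose v := mon_col k b + s *: mon_col k b'.
have := qmodule_single ord0 (psd_outer v).
congr qmodule; apply/matrixP => r j; rewrite !mxE frob_outer /v.
rewrite !bformDl !bformDr !bformZl !bformZr !bform_Amat_mon_col // /gfull /= !shift_coef_poly1.
rewrite (maddC b' b) mulrA ss mul1r !(eq_sym (mon j)).
set x1 := (_ == _)%:R; set x2 := (_ == _)%:R; set x3 := (_ == _)%:R.
ring.
Qed.

Variable rad : R.
Hypothesis Hm : (1 <= m)%N.
Hypothesis Hball : forall a : MI n, coef (g m) a = coef (ballpoly n rad) a.

Lemma gfull_ball : gfull g (ord_max : 'I_m.+1) = g m.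
Proof. by rewrite /gfull /=; case: eqP => // m0; move: Hm; rewrite m0. Qed.

Lemma dg_ball_le1 : (dg g (ord_max : 'I_m.+1) <= 1)%N.
Proof.
have : (deg (g m) <= 2)%N.
  by apply: deg_le => a; rewrite Hball => /coef_nz_mem[t tb <-]; exact: ballpoly_mdeg tb.
by rewrite /dg gfull_ball; case: (deg (g m)) => [|[|[|]]].
Qed.

Lemma shift_coef_ball (i : 'I_n) c a : shift_coef (g m) c a =
  rad ^+ 2 * (c == a)%:R - \sum_(j < n) (madd c (mi2 j) == a)%:R.
Proof.
have deg_ge2 : (2 <= deg (g m))%N.
  by rewrite -(mdeg_mi2 i) mdeg_le_deg // Hball coef_ballpoly_mi2 oppr_eq0 oner_eq0.
rewrite /shift_coef; under eq_bigr => c' _ do rewrite Hball.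
rewrite (@sum_coef_seq R n _ _ (fun c' => (madd c c' == a)%:R)) ?mons_uniq //.
  rewrite /ballpoly big_cons big_map /= madd0 big_enum /= -sumrN; congr (_ + _).
  by apply: eq_bigr => j _; rewrite mulN1r.
by move=> t tb; rewrite mem_mons (leq_trans (ballpoly_mdeg tb)).
Qed.

Lemma qmodule_ball_shift (i : 'I_n) b : (mdeg b < d)%N ->
  qmodule (rad ^+ 2 *: monvec (madd b b) - \sum_(j < n) monvec (madd (madd b b) (mi2 j))).
Proof.
move=> hb; have hbk : b \in mons n (d - dg g (ord_max : 'I_m.+1)).
  by rewrite mem_mons; have := dg_ball_le1; lia.
have := qmodule_single ord_max (psd_outer (mon_col _ b)).
congr qmodule; apply/matrixP => r j; rewrite !mxE frob_outer bform_Amat_mon_col //.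
rewrite gfull_ball (shift_coef_ball i) summxE eq_sym; congr (_ * _ - _).
by apply: eq_bigr => k _; rewrite mxE eq_sym.
Qed.

Lemma qmodule_mon0 : qmodule (monvec (mi0 n)).
Proof. by have := @qmodule_square (mi0 n); rewrite madd0 mdeg_mi0; apply. Qed.

(* induction on [|b|]: peel one variable off with the ball constraint at [x^(b - e_i)] *)
Lemma qmodule_bound_square b : (mdeg b <= d)%N ->
  exists s, qmodule (s *: monvec (mi0 n) - monvec (madd b b)).
Proof.
move: {2}(mdeg b) (erefl (mdeg b)) => k; elim: k b => [|k IH] b bk bd.
  exists 1; rewrite (mdeg_eq0 bk) madd0 scale1r subrr; exact: qmodule0.
have [b' [i [-> b'k]]] := mdeg_eqS bk.
have b'd : (mdeg b' < d)%N by rewrite b'k; move: bd; rewrite bk.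
have [s hs] := IH b' b'k (ltnW b'd).
have := qmodule_ball_shift i b'd; rewrite (bigD1 i) //= => hball.
have hrest : qmodule (\sum_(j < n | j != i) monvec (madd (madd b' b') (mi2 j))).
  rewrite big_mkcond /=; apply: qmodule_sum => j; case: ifP => _; last exact: qmodule0.
  by rewrite -madd_mi1; apply: qmodule_square; rewrite mdeg_madd mdeg_mi1 addn1.
exists (rad ^+ 2 * s).
have -> : (rad ^+ 2 * s) *: monvec (mi0 n) - monvec (madd (madd b' (mi1 i)) (madd b' (mi1 i))) =
  rad ^+ 2 *: (s *: monvec (mi0 n) - monvec (madd b' b')) +
  (rad ^+ 2 *: monvec (madd b' b') - (monvec (madd (madd b' b') (mi2 i)) +
     \sum_(j < n | j != i) monvec (madd (madd b' b') (mi2 j)))) +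
  \sum_(j < n | j != i) monvec (madd (madd b' b') (mi2 j)).
  by rewrite madd_mi1; apply/matrixP => r c; rewrite !mxE; ring.
by apply: qmoduleD => //; apply: qmoduleD => //; apply: qmoduleZ => //; exact: sqr_ge0.
Qed.

Lemma qmodule_bound_mon c : c \in mons n (2 * d) ->
  exists s, qmodule (s *: monvec (mi0 n) - monvec c) /\ qmodule (s *: monvec (mi0 n) + monvec c).
Proof.
move=> hc; have /mdeg_split[a [b [-> [ad bd]]]] : (mdeg c <= d + d)%N.
  by rewrite addnn -mul2n -mem_mons.
have [s1 h1] := qmodule_bound_square ad; have [s2 h2] := qmodule_bound_square bd.
have h2i : 0 <= (2%:R : R)^-1 by rewrite invr_ge0 ler0n.
(* [x^(2a) + x^(2b) + 2 t x^(a+b)] is a square for [t = 1] and for [t = -1] *)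
have bound t : t * t = 1 -> qmodule ((s1 + s2) / 2%:R *: monvec (mi0 n) + t *: monvec (madd a b)).
  move=> tt; have -> : (s1 + s2) / 2%:R *: monvec (mi0 n) + t *: monvec (madd a b) = 2%:R^-1 *:
      ((s1 *: monvec (mi0 n) - monvec (madd a a)) + (s2 *: monvec (mi0 n) - monvec (madd b b)) +
       (monvec (madd a a) + monvec (madd b b) + (2%:R * t) *: monvec (madd a b))).
    by apply/matrixP => r j; rewrite !mxE; field.
  by apply: qmoduleZ => //; apply: qmoduleD; [apply: qmoduleD|apply: qmodule_binomial].
exists ((s1 + s2) / 2%:R); split.
  by rewrite -scaleN1r; apply: bound; rewrite mulrNN mulr1.
by rewrite -[monvec (madd a b)]scale1r; apply: bound; rewrite mulr1.
Qed.

Lemma qmodule_order_unit x : exists s, qmodule (s *: monvec (mi0 n) - x).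
Proof.
have bound_coord (j : 'I_N) (r : R) : exists s, qmodule (s *: monvec (mi0 n) - r *: monvec (mon j)).
  have [s [hm hp]] := qmodule_bound_mon (mon_mem j).
  have [r0|/ltW r0] := leP 0 r.
    by exists (r * s); rewrite -scalerA -scalerBr; exact: qmoduleZ.
  exists (- r * s); have -> : - r * s *: monvec (mi0 n) - r *: monvec (mon j) =
      - r *: (s *: monvec (mi0 n) + monvec (mon j)) by rewrite scalerDr scalerA scaleNr.
  by apply: qmoduleZ; rewrite ?oppr_ge0.
have bound_sum (r : seq 'I_N) :
    exists s, qmodule (s *: monvec (mi0 n) - \sum_(j <- r) x 0 j *: monvec (mon j)).
  elim: r => [|j r [s hs]]; first by exists 0; rewrite big_nil scale0r subrr; exact: qmodule0.
  have [sj hj] := bound_coord j (x 0 j); exists (s + sj); rewrite big_cons.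
  have -> : (s + sj) *: monvec (mi0 n) -
        (x 0 j *: monvec (mon j) + \sum_(j <- r) x 0 j *: monvec (mon j))
      = (s *: monvec (mi0 n) - \sum_(j <- r) x 0 j *: monvec (mon j)) +
        (sj *: monvec (mi0 n) - x 0 j *: monvec (mon j)).
    by rewrite scalerDl; apply/matrixP => i k; rewrite !mxE; ring.
  exact: qmoduleD.
have [s hs] := bound_sum (index_enum 'I_N); exists s.
by rewrite [x in _ - x]row_sum_delta; under eq_bigr => j _ do rewrite -monvec_mon.
Qed.

Lemma Dvals_exists : exists z, Dvals f g m d z.
Proof.
have [s hs] := qmodule_order_unit (- fvec); exists (- s); apply: Dvals_of_qmodule.
by rewrite scaleNr opprK addrC; move: hs; rewrite opprK.
Qed.

Lemma duality_alternative z : complete_field R ->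
  Dvals f g m d z \/ exists2 v, Pvals f g m d v & v <= z.
Proof.
move=> R_complete.
have [Qz|[a [a_ge0 [a1 a_le]]]] := order_unit_separation R_complete qmodule0 qmoduleD qmoduleZ
  qmodule_mon0 qmodule_order_unit (fvec - z *: monvec (mi0 n)).
  by left; exact: Dvals_of_qmodule.
right; have [a_feas a_obj] := Pfeas_of_functional a_ge0 a1.
exists (rdot fvec a); first by exists (fun b => rdot (monvec b) a).
by move: a_le; rewrite rdotBl rdotZl a1 mulr1 subr_le0.
Qed.

End Relaxation.

Theorem theorem1 (R : realFieldType) (Rcomplete : complete_field R)
  (n m : nat) (f : mpoly R n) (g : nat -> mpoly R n) (rad : R)
  (Hm : (1 <= m)%N)
  (Hball : forall a : MI n, coef (g m) a = coef (ballpoly n rad) a)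
  (d : nat) (Hd : (dmin g m <= d)%N) (Hf : (deg f <= 2 * d)%N) :
  exists v : xR R,
    v <> XNInf R /\ is_infx (Pvals f g m d) v /\ is_supx (Dvals f g m d) v.
Proof.
apply: (infx_supx_of_alternative Rcomplete).
- exact: (Dvals_exists f Hd Hm Hball).
- by move=> z v [Z hZ] [y [hy <-]]; exact: (weak_duality Hd hZ hy).
- by move=> z; exact: (duality_alternative f Hd Hm Hball z Rcomplete).
Qed.
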